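(* Consider the self-attention dynamics with LayerNorm $X^{(t+1)}=D^{(t)}A^{(t)}X^{(t)}W_V^{(t)}$, where $\mathcal{G}$ is strongly connected, \textbf{A1} and \textbf{A2} hold, every $W_V^{(t)}\in\mathbb{R}^{d\times d}$ is orthogonal, and the initial input $X^{(0)}$ has rows in $\mathbb{S}^{d-1}$, $N\le d$, and full rank $N$. Then there exist constants $C_1,C_2>0$ such that $C_1\le D^{(t)}_{i,i}\le C_2$ for all $t\ge0$ and all $i\in[N]$.
   Context: Tokens are the rows of $X\in\mathbb{R}^{N\times d}$. Attention mask: directed graph $\mathcal{G}$ on $[N]$, $(j,i)\in E(\mathcal{G})$ meaning token $i$ attends to token $j$; $\mathcal{N}_i=\{k:(k,i)\in E(\mathcal{G})\}$. Masked softmax: $\mathrm{softmax}_{\mathcal{G}}(R)_{ij}=\exp(R_{ij})/\sum_{k\in\mathcal{N}_i}\exp(R_{ik})$ if $(j,i)\in E(\mathcal{G})$, else $0$. $A^{(t)}=\mathrm{softmax}_{\mathcal{G}}\big(X^{(t)}W_Q^{(t)}(X^{(t)}W_K^{(t)})^\top/\sqrt{d_{QK}}\big)$, $D^{(t)}=\mathrm{diag}(d_1,\dots,d_N)$ with $d_i=1/\|(A^{(t)}X^{(t)}W_V^{(t)})_{i,:}\|_2$. \textbf{A1}: $(i,i)\in E(\mathcal{G})$ for all $i$. \textbf{A2}: $\sup_t\max\{\|W_Q^{(t)}\|_2,\|W_K^{(t)}\|_2\}<\infty$. Strongly connected: any two distinct nodes are mutually reachable by directed paths. *)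

From HB Require Import structures.
From mathcomp Require Import all_boot all_order all_algebra.
From mathcomp Require Import all_classical all_reals all_analysis.
Set Implicit Arguments. Unset Strict Implicit. Unset Printing Implicit Defensive.
Import Order.TTheory GRing.Theory Num.Theory.
Local Open Scope ring_scope.

Section Defs.
Variable R : realType.

Definition vnorm n (v : 'rV[R]_n) : R := Num.sqrt (\sum_(j < n) v 0 j ^+ 2).

Definition opnorm_le m n (W : 'M[R]_(m, n)) (B : R) : Prop :=
  forall x : 'rV[R]_m, vnorm (x *m W) <= B * vnorm x.

Definition orthogonal_mx n (W : 'M[R]_n) : Prop := W *m W^T = 1%:M.

(* G j i  means (j,i) is an edge: token i attends to token j *)
Definition masked_softmax N (G : rel 'I_N) (M : 'M[R]_N) : 'M[R]_N :=
  \matrix_(i, j) (if G j i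
                  then expR (M i j) / \sum_(k < N | G k i) expR (M i k)
                  else 0).

Definition attn N d dqk (G : rel 'I_N) (X : 'M[R]_(N, d))
  (WQ WK : 'M[R]_(d, dqk)) : 'M[R]_N :=
  masked_softmax G ((Num.sqrt (dqk%:R))^-1 *: ((X *m WQ) *m (X *m WK)^T)).

Definition lnD N d dqk (G : rel 'I_N) (X : 'M[R]_(N, d))
  (WQ WK : 'M[R]_(d, dqk)) (WV : 'M[R]_d) : 'M[R]_N :=
  diag_mx (\row_i (vnorm (row i (attn G X WQ WK *m X *m WV)))^-1).

Definition strongly_connected N (G : rel 'I_N) : Prop :=
  forall i j : 'I_N, i != j -> connect G i j /\ connect G j i.

End Defs.

(** Since [X(0)] has full row rank [N], some probe vector [y] satisfies
    [X(0)_i . y = 1] for every row.  Every row then lies in the cap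
    [{u | |u| <= 1, u . y >= 1}] of the unit ball.  The cap is convex, so
    it contains the rows of [A X] for the row-stochastic attention matrix [A];
    it is mapped onto the cap of [y W_V] by the orthogonal [W_V]; and it is
    stable under normalisation.  Tracking [y(t+1) = y(t) W_V(t)], whose norm
    never changes, the rows [r] of [A X W_V] satisfy
    [1 / |y(0)| <= |r| <= 1] by Cauchy-Schwarz, hence
    [1 <= D_ii = 1 / |r| <= |y(0)|]. *)
From HB Require Import structures.
From mathcomp Require Import all_boot all_order all_algebra.
From mathcomp Require Import all_classical all_reals all_analysis.
From mathcomp Require Import ring lra.
Import Order.TTheory GRing.Theory Num.Theory.
Set Implicit Arguments. Unset Strict Implicit. Unset Printing Implicit Defensive.
Local Open Scope ring_scope.

Section Euclidean.
Variable R : realType.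
Implicit Types (n : nat) (c : R).

Definition dot n (u v : 'rV[R]_n) : R := \sum_j u 0 j * v 0 j.

Lemma dot_ge0 n (u : 'rV[R]_n) : 0 <= dot u u.
Proof. by apply: sumr_ge0 => j _; rewrite -expr2 sqr_ge0. Qed.

Lemma vnormE n (u : 'rV[R]_n) : vnorm u = Num.sqrt (dot u u).
Proof. by rewrite /vnorm /dot; under eq_bigr do rewrite expr2. Qed.

Lemma vnorm_ge0 n (u : 'rV[R]_n) : 0 <= vnorm u.
Proof. by rewrite vnormE sqrtr_ge0. Qed.

Lemma vnorm_sqr n (u : 'rV[R]_n) : vnorm u ^+ 2 = dot u u.
Proof. by rewrite vnormE sqr_sqrtr // dot_ge0. Qed.

Lemma vnorm_eq0 n (u : 'rV[R]_n) : vnorm u = 0 -> u = 0.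
Proof.
move=> /eqP; rewrite /vnorm sqrtr_eq0 => u_le0.
have sum0 : \sum_(j < n) u 0 j ^+ 2 = 0.
  by apply/eqP; rewrite eq_le u_le0 sumr_ge0 // => j _; rewrite sqr_ge0.
apply/rowP => j; rewrite mxE; apply/eqP; rewrite -sqrf_eq0; apply/eqP.
exact: (psumr_eq0P (fun k _ => sqr_ge0 (u 0 k)) sum0).
Qed.

Lemma dotC n (u v : 'rV[R]_n) : dot u v = dot v u.
Proof. by apply: eq_bigr => j _; rewrite mulrC. Qed.

Lemma dotZl n c (u v : 'rV[R]_n) : dot (c *: u) v = c * dot u v.
Proof. by rewrite /dot big_distrr; apply: eq_bigr => j _; rewrite mxE -mulrA. Qed.

Lemma dot_trmx n (u v : 'rV[R]_n) : dot u v = (u *m v^T) 0 0.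
Proof. by rewrite mxE; apply: eq_bigr => j _; rewrite mxE. Qed.

Lemma vnormZ n c (u : 'rV[R]_n) : vnorm (c *: u) = `|c| * vnorm u.
Proof.
by rewrite !vnormE dotZl dotC dotZl mulrA -expr2 sqrtrM ?sqr_ge0 // sqrtr_sqr.
Qed.

Lemma dot_row_mulmx N n (A : 'M[R]_N) (X : 'M[R]_(N, n)) i (v : 'rV[R]_n) :
  dot (row i (A *m X)) v = \sum_j A i j * dot (row j X) v.
Proof.
rewrite /dot; under eq_bigr do rewrite !mxE big_distrl /=.
rewrite exchange_big /=; apply: eq_bigr => j _; rewrite big_distrr /=.
by apply: eq_bigr => k _; rewrite !mxE mulrA.
Qed.

Lemma dot_orthogonal n (W : 'M[R]_n) (u v : 'rV[R]_n) :
  orthogonal_mx W -> dot (u *m W) (v *m W) = dot u v.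
Proof.
by move=> WWt; rewrite !dot_trmx trmx_mul mulmxA -(mulmxA u) WWt mulmx1.
Qed.

Lemma vnorm_orthogonal n (W : 'M[R]_n) (u : 'rV[R]_n) :
  orthogonal_mx W -> vnorm (u *m W) = vnorm u.
Proof. by move=> WWt; rewrite !vnormE dot_orthogonal. Qed.

Lemma dot_le_vnorm n (u v : 'rV[R]_n) : dot u v <= vnorm u * vnorm v.
Proof.
have [/vnorm_eq0 ->|u_neq0] := eqVneq (vnorm u) 0.
  by rewrite /dot big1 ?mulr_ge0 ?vnorm_ge0 // => j _; rewrite mxE mul0r.
have [/vnorm_eq0 ->|v_neq0] := eqVneq (vnorm v) 0.
  by rewrite /dot big1 ?mulr_ge0 ?vnorm_ge0 // => j _; rewrite mxE mulr0.
set a := vnorm v; set b := vnorm u.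
have a_gt0 : 0 < a by rewrite lt_def v_neq0 vnorm_ge0.
have b_gt0 : 0 < b by rewrite lt_def u_neq0 vnorm_ge0.
(* expand [0 <= |a u - b v|^2] *)
have : 0 <= \sum_j (a * u 0 j - b * v 0 j) ^+ 2.
  by apply: sumr_ge0 => j _; rewrite sqr_ge0.
have -> : \sum_j (a * u 0 j - b * v 0 j) ^+ 2 =
          a ^+ 2 * dot u u - 2 * a * b * dot u v + b ^+ 2 * dot v v.
  rewrite /dot !big_distrr -sumrB -big_split /=.
  by apply: eq_bigr => j _; ring.
rewrite -(vnorm_sqr u) -(vnorm_sqr v) -/a -/b => expansion_ge0.
rewrite mulrC -(ler_pM2l (_ : 0 < 2 * a * b)) ?mulr_gt0 //; nra.
Qed.

End Euclidean.

Section Cap.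
Variable R : realType.

Definition in_cap n (y u : 'rV[R]_n) : Prop := vnorm u <= 1 /\ 1 <= dot u y.

Definition row_stochastic N (A : 'M[R]_N) : Prop :=
  (forall i j, 0 <= A i j) /\ (forall i, \sum_j A i j = 1).

Lemma in_cap_vnorm n (y u : 'rV[R]_n) : in_cap y u -> 1 <= vnorm u * vnorm y.
Proof. by case=> _ uy; exact: le_trans uy (dot_le_vnorm _ _). Qed.

Lemma in_cap_vnorm_gt0 n (y u : 'rV[R]_n) : in_cap y u -> 0 < vnorm u.
Proof.
move=> /in_cap_vnorm uy; have := vnorm_ge0 u; have := vnorm_ge0 y; nra.
Qed.

Lemma in_cap_normalize n (y u : 'rV[R]_n) :
  in_cap y u -> in_cap y ((vnorm u)^-1 *: u).
Proof.
move=> capu; have u_gt0 := in_cap_vnorm_gt0 capu; case: capu => u_le1 uy.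
rewrite /in_cap vnormZ dotZl gtr0_norm ?invr_gt0 // mulVf ?gt_eqF //.
split=> //; have : 1 <= (vnorm u)^-1 by rewrite invf_ge1.
nra.
Qed.

Lemma in_cap_orthogonal n (W : 'M[R]_n) (y u : 'rV[R]_n) :
  orthogonal_mx W -> in_cap y u -> in_cap (y *m W) (u *m W).
Proof. by move=> WWt; rewrite /in_cap vnorm_orthogonal // dot_orthogonal. Qed.

Lemma in_cap_row_stochastic N n (A : 'M[R]_N) (X : 'M[R]_(N, n)) (y : 'rV[R]_n) :
  row_stochastic A -> (forall j, in_cap y (row j X)) ->
  forall i, in_cap y (row i (A *m X)).
Proof.
move=> [A_ge0 A_sum1] capX i; set w := row i (A *m X).
(* [|w|^2 = sum_j A_ij (X_j . w) <= sum_j A_ij |w|], so [|w| <= 1] *)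
have w_sqr : vnorm w ^+ 2 <= vnorm w.
  rewrite vnorm_sqr {1}/w dot_row_mulmx -[leRHS]mul1r -(A_sum1 i) big_distrl.
  apply: ler_sum => j _; apply: ler_wpM2l => //.
  apply: le_trans (dot_le_vnorm _ _) _.
  by rewrite ler_piMl ?vnorm_ge0 //; case: (capX j).
split; first by have := vnorm_ge0 w; nra.
rewrite dot_row_mulmx -(A_sum1 i); apply: ler_sum => j _.
by rewrite -[leLHS]mulr1 ler_wpM2l //; case: (capX j).
Qed.

Lemma row_free_probe N n (X : 'M[R]_(N, n)) :
  row_free X -> exists y : 'rV[R]_n, forall i, dot (row i X) y = 1.
Proof.
case/row_freeP => Y XY; exists (Y *m const_mx 1)^T => i.
by rewrite dot_trmx trmxK -row_mul mulmxA XY mul1mx !mxE.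
Qed.

End Cap.

Lemma masked_softmax_row_stochastic (R : realType) N (G : rel 'I_N)
    (M : 'M[R]_N) :
  (forall i, G i i) -> row_stochastic (masked_softmax G M).
Proof.
move=> Grefl; split=> [i j|i].
  rewrite mxE; case: (G j i) => //.
  by rewrite divr_ge0 ?expR_ge0 ?sumr_ge0.
have Z_gt0 : 0 < \sum_(k < N | G k i) expR (M i k).
  by rewrite (bigD1 i) //= ltr_wpDr ?expR_gt0 ?sumr_ge0.
under eq_bigr do rewrite mxE.
by rewrite -big_mkcond /= -big_distrl /= divff ?gt_eqF.
Qed.

Section LayerNormDynamics.
Variables (R : realType) (N d dqk : nat) (G : rel 'I_N).
Variables (X : nat -> 'M[R]_(N, d)) (WQ WK : nat -> 'M[R]_(d, dqk)).
Variable WV : nat -> 'M[R]_d.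
Hypothesis G_refl : forall i, G i i.
Hypothesis WV_orthogonal : forall t, orthogonal_mx (WV t).
Hypothesis X_step : forall t, X t.+1 =
  lnD G (X t) (WQ t) (WK t) (WV t) *m attn G (X t) (WQ t) (WK t)
    *m X t *m WV t.

Let D t := lnD G (X t) (WQ t) (WK t) (WV t).
Let V t := attn G (X t) (WQ t) (WK t) *m X t *m WV t.

Lemma lnD_diag t i : D t i i = (vnorm (row i (V t)))^-1.
Proof. by rewrite /D /lnD mxE eqxx mulr1n mxE. Qed.

Lemma row_X_step t i : row i (X t.+1) = D t i i *: row i (V t).
Proof.
rewrite X_step -!mulmxA (mulmxA (attn _ _ _ _)) -/(V t).
by apply/rowP => k; rewrite /D /lnD mul_diag_mx !mxE eqxx mulr1n.
Qed.

Variable y0 : 'rV[R]_d.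

Fixpoint probe t : 'rV[R]_d := if t is t'.+1 then probe t' *m WV t' else y0.

Lemma vnorm_probe t : vnorm (probe t) = vnorm y0.
Proof. by elim: t => //= t <-; rewrite vnorm_orthogonal. Qed.

Lemma in_cap_V t :
  (forall i, in_cap (probe t) (row i (X t))) ->
  forall i, in_cap (probe t.+1) (row i (V t)).
Proof.
move=> capX i; rewrite /V row_mul; apply: in_cap_orthogonal => //.
by apply: in_cap_row_stochastic capX i; apply: masked_softmax_row_stochastic.
Qed.

Hypothesis X0_in_cap : forall i, in_cap y0 (row i (X 0)).

Lemma in_cap_X t i : in_cap (probe t) (row i (X t)).
Proof.
elim: t i => [//|t IH] i.
by rewrite row_X_step lnD_diag; apply/in_cap_normalize/in_cap_V.
Qed.

Lemma lnD_bounds t i : 1 <= D t i i <= vnorm y0.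
Proof.
have capV := in_cap_V (in_cap_X t) i.
have V_gt0 := in_cap_vnorm_gt0 capV.
have := in_cap_vnorm capV; case: capV => V_le1 _.
rewrite vnorm_probe lnD_diag invf_ge1 // V_le1 /= => V_ge.
by rewrite -div1r ler_pdivrMr // mulrC.
Qed.

End LayerNormDynamics.

Theorem mainTheorem6 (R : realType) (N d dqk : nat) (G : rel 'I_N)
  (X : nat -> 'M[R]_(N, d)) (WQ WK : nat -> 'M[R]_(d, dqk))
  (WV : nat -> 'M[R]_d) :
  (0 < dqk)%N ->
  strongly_connected G ->
  (forall i, G i i) ->
  (exists B : R, forall t, opnorm_le (WQ t) B /\ opnorm_le (WK t) B) ->
  (forall t, orthogonal_mx (WV t)) ->
  (forall t, X t.+1 =
     lnD G (X t) (WQ t) (WK t) (WV t) *m attn G (X t) (WQ t) (WK t)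
       *m X t *m WV t) ->
  (forall i, vnorm (row i (X 0%N)) = 1) ->
  (N <= d)%N ->
  \rank (X 0%N) = N ->
  exists C1 C2 : R, 0 < C1 /\ 0 < C2 /\
    forall (t : nat) (i : 'I_N),
      C1 <= lnD G (X t) (WQ t) (WK t) (WV t) i i <= C2.
Proof.
move=> _ _ G_refl _ WV_orth X_step X0_unit _ X0_rank.
have [y0 X0y0] : exists y0, forall i, dot (row i (X 0%N)) y0 = 1.
  by apply: row_free_probe; rewrite /row_free X0_rank.
have X0_cap i : in_cap y0 (row i (X 0%N)) by rewrite /in_cap X0_unit X0y0.
have bounds := lnD_bounds G_refl WV_orth X_step X0_cap.
exists 1, (vnorm y0 + 1); split; first exact: ltr01.
split=> [|t i]; first by rewrite ltr_pwDr ?vnorm_ge0.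
have /andP[-> /le_trans->] := bounds t i; rewrite ?lerDl //.
Qed.
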